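(* Let $A\in\mathbb{C}^{n\times n}$ be Hermitian, $\beta>0$, $f(\mathbf{z})=\frac12\mathbf{z}^*A\mathbf{z}+\frac{\beta}{2}\sum_{k}|z_k|^4$, and let $\mathbf{z}\in\mathbb{CS}^{n-1}$ be a stationary point of $\min_{\mathbf{z}\in\mathbb{CS}^{n-1}}f(\mathbf{z})$. Then $\mathbf{z}$ is a local minimizer of $f$ on $\mathbb{CS}^{n-1}$ if and only if there exists a constant $M_{\mathbf{z}}>0$ such that $G(\mathbf{v},t)\ge 0$ for all $\mathbf{v}\in\mathcal{T}_{\mathbf{z}}\cap\mathbb{CS}^{n-1}$ and all $t\in\mathbb{R}$ with $|t|\ge M_{\mathbf{z}}$.
   Context: $\mathbb{CS}^{n-1}$ is the unit sphere of $\mathbb{C}^n$. A point $\mathbf{z}\in\mathbb{CS}^{n-1}$ is stationary if $[A+2\beta\,\mathrm{diag}(|\mathbf{z}|^2)]\mathbf{z}=2\lambda\mathbf{z}$, where $\lambda=\frac12\mathbf{z}^*A\mathbf{z}+\beta\|\mathbf{z}\|_4^4$ and $|\mathbf{z}|^2=(|z_1|^2,\dots,|z_n|^2)$. The tangent space is $\mathcal{T}_{\mathbf{z}}=\{\mathbf{v}\in\mathbb{C}^n:\mathrm{Re}(\mathbf{v}^*\mathbf{z})=0\}$. Define $H_f(\mathbf{z})[\mathbf{v}]=\mathbf{v}^*[A+2\beta\,\mathrm{diag}(|\mathbf{z}|^2)-2\lambda I]\mathbf{v}+4\beta\sum_{k}\mathrm{Re}(v_k\bar z_k)^2$, $H_3(\mathbf{v})=\beta\sum_k(|v_k|^2-|z_k|^2)\mathrm{Re}(\bar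 z_kv_k)$, and $G(\mathbf{v},t)=H_f(\mathbf{z})[\mathbf{v}]\,t^2+4H_3(\mathbf{v})\,t+2[f(\mathbf{v})-f(\mathbf{z})]$. *)

From HB Require Import structures.
From mathcomp Require Import all_boot all_order all_algebra.
From mathcomp Require Import complex reals.
Set Implicit Arguments. Unset Strict Implicit. Unset Printing Implicit Defensive.
Import Order.TTheory GRing.Theory Num.Theory.
Local Open Scope ring_scope.
Local Open Scope complex_scope.

Section Defs.
Variables (R : realType) (n : nat).
Local Notation C := R[i].
Local Notation vec := ('I_n -> C).

Definition csq (c : C) : R := complex.Re c ^+ 2 + complex.Im c ^+ 2.

Definition is_hermitian (A : 'M[C]_n) : Prop := forall i j, A j i = conjc (A i j).

Definition reinner (v w : vec) : R :=
  complex.Re (\sum_(k < n) conjc (v k) * w k).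

(* Re (v^* A v) (real when A is Hermitian) *)
Definition quadA (A : 'M[C]_n) (v : vec) : R :=
  complex.Re (\sum_(i < n) \sum_(j < n) conjc (v i) * A i j * v j).

Definition norm44 (z : vec) : R := \sum_(k < n) csq (z k) ^+ 2.

Definition norm22 (z : vec) : R := \sum_(k < n) csq (z k).

Definition on_sphere (z : vec) : Prop := norm22 z = 1.

Definition fobj (A : 'M[C]_n) (beta : R) (z : vec) : R :=
  quadA A z / 2 + beta / 2 * norm44 z.

Definition lam (A : 'M[C]_n) (beta : R) (z : vec) : R :=
  quadA A z / 2 + beta * norm44 z.

Definition stationary (A : 'M[C]_n) (beta : R) (z : vec) : Prop :=
  on_sphere z /\
  forall i, \sum_(j < n) A i j * z j + (2 * beta * csq (z i))%:C * z i
            = (2 * lam A beta z)%:C * z i.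

Definition tangent (z v : vec) : Prop := reinner v z = 0.

Definition Hf (A : 'M[C]_n) (beta : R) (z v : vec) : R :=
  quadA A v + \sum_(k < n) (2 * beta * csq (z k) - 2 * lam A beta z) * csq (v k)
  + 4 * beta * \sum_(k < n) complex.Re (v k * conjc (z k)) ^+ 2.

Definition H3 (beta : R) (z v : vec) : R :=
  beta * \sum_(k < n) (csq (v k) - csq (z k)) * complex.Re (conjc (z k) * v k).

Definition Gfun (A : 'M[C]_n) (beta : R) (z v : vec) (t : R) : R :=
  Hf A beta z v * t ^+ 2 + 4 * H3 beta z v * t + 2 * (fobj A beta v - fobj A beta z).

Definition dist (w z : vec) : R := Num.sqrt (\sum_(k < n) csq (w k - z k)).

Definition local_min_sphere (A : 'M[C]_n) (beta : R) (z : vec) : Prop :=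
  on_sphere z /\
  exists eps : R, 0 < eps /\
    forall w : vec, on_sphere w -> dist w z < eps -> fobj A beta z <= fobj A beta w.
End Defs.

(* Every point of the sphere can be written w = a z + b v with v a unit tangent
   vector at z, b >= 0 and a^2 + b^2 = 1; it is close to z exactly when b is
   small and the slope t = a / b is large.  Expanding f along this great circle,
   stationarity of z turns the cross term Re (v^* A z) into a quartic term, and
   what remains is the identity 2 (f(w) - f(z)) = b^4 G(v, a / b).  So f(w) >= f(z)
   near z if and only if G(v, t) >= 0 for all unit tangent v and all large |t|. *)

From HB Require Import structures.
From mathcomp Require Import all_boot all_order all_algebra.
From mathcomp Require Import complex reals ring lra.
From mathcomp Require Import boolp.

Set Implicit Arguments.
Unset Strict Implicit.
Unset Printing Implicit Defensive.

Import Order.TTheory GRing.Theory Num.Theory.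
Local Open Scope ring_scope.
Local Open Scope complex_scope.

Local Notation Re := complex.Re.
Local Notation Im := complex.Im.

Section ComplexScalars.
Variable R : rcfType.
Implicit Types (a b : R) (x y : R[i]).

Lemma ReM x y : Re (x * y) = Re x * Re y - Im x * Im y.
Proof. by case: x => ? ?; case: y. Qed.

Lemma ImM x y : Im (x * y) = Re x * Im y + Im x * Re y.
Proof. by case: x => ? ?; case: y. Qed.

Lemma ReJ x : Re x^* = Re x. Proof. by case: x. Qed.

Lemma ImJ x : Im x^* = - Im x. Proof. by case: x. Qed.

Lemma ReCM a x : Re (a%:C * x) = a * Re x.
Proof. by case: x => ? ?; rewrite /= mul0r subr0. Qed.

Lemma ReJMC x y : Re (x^* * y) = Re (y^* * x).
Proof. by rewrite !ReM !ReJ !ImJ; ring. Qed.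

Lemma ReJM_lincomb a b x y w :
  Re ((a%:C * x + b%:C * y)^* * w) = a * Re (x^* * w) + b * Re (y^* * w).
Proof. by case: x => ? ?; case: y => ? ?; case: w => ? ? /=; ring. Qed.

Lemma ReJMM_lincomb a b x y c x' y' :
  Re ((a%:C * x + b%:C * y)^* * c * (a%:C * x' + b%:C * y')) =
  a ^+ 2 * Re (x^* * c * x') + a * b * Re (x^* * c * y')
  + a * b * Re (y^* * c * x') + b ^+ 2 * Re (y^* * c * y').
Proof.
by case: x => ? ?; case: y => ? ?; case: c => ? ?; case: x' => ? ?; case: y' => ? ? /=; ring.
Qed.

Lemma ReJMM_conj x c y : Re (x^* * c^* * y) = Re (y^* * c * x).
Proof. by case: x => ? ?; case: c => ? ?; case: y => ? ? /=; ring. Qed.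

Lemma ReJM_iMl x : Re (('i * x)^* * x) = 0.
Proof. by case: x => ? ? /=; ring. Qed.

End ComplexScalars.

Section SquaredModulus.
Variable R : realType.
Implicit Types (a b : R) (x y : R[i]).

Lemma csqE x : csq x = Re (x^* * x).
Proof. by rewrite ReM ReJ ImJ /csq; ring. Qed.

Lemma csq_ge0 x : 0 <= csq x.
Proof. by rewrite addr_ge0 ?sqr_ge0. Qed.

Lemma csq_eq0 x : csq x = 0 -> x = 0.
Proof.
case: x => p q /eqP; rewrite /csq paddr_eq0 ?sqr_ge0 //= !sqrf_eq0.
by case/andP=> /eqP-> /eqP->.
Qed.

Lemma csq_lincomb a b x y :
  csq (a%:C * x + b%:C * y) = a ^+ 2 * csq x + 2 * a * b * Re (x^* * y) + b ^+ 2 * csq y.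
Proof. by rewrite /csq !raddfD /= !ReM !ImM ReJ ImJ /=; ring. Qed.

Lemma csq_iMl x : csq ('i * x) = csq x.
Proof. by case: x => ? ?; rewrite /csq /=; ring. Qed.

End SquaredModulus.

Section Vectors.
Variables (R : realType) (n : nat).
Local Notation vec := ('I_n -> R[i]).
Implicit Types (a b : R) (x y z v w : vec).

Definition lincomb a b x y : vec := fun k => a%:C * x k + b%:C * y k.

Lemma reinnerE x y : reinner x y = \sum_k Re ((x k)^* * y k).
Proof. exact: raddf_sum. Qed.

Lemma reinnerC x y : reinner x y = reinner y x.
Proof. by rewrite !reinnerE; apply: eq_bigr => k _; rewrite ReJMC. Qed.

Lemma reinnerxx x : reinner x x = norm22 x.
Proof. by rewrite reinnerE; apply: eq_bigr => k _; rewrite csqE. Qed.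

Lemma reinner_lincombl a b x y w :
  reinner (lincomb a b x y) w = a * reinner x w + b * reinner y w.
Proof.
rewrite !reinnerE !mulr_sumr -big_split; apply: eq_bigr => k _ /=.
exact: ReJM_lincomb.
Qed.

Lemma norm22_lincomb a b x y : norm22 (lincomb a b x y) =
  a ^+ 2 * norm22 x + 2 * a * b * reinner x y + b ^+ 2 * norm22 y.
Proof.
rewrite /norm22 reinnerE !mulr_sumr -!big_split; apply: eq_bigr => k _.
exact: csq_lincomb.
Qed.

Lemma norm44_lincomb a b x y : norm44 (lincomb a b x y) =
  a ^+ 4 * norm44 x
  + 4 * a ^+ 3 * b * (\sum_k csq (x k) * Re ((x k)^* * y k))
  + a ^+ 2 * b ^+ 2 * (4 * \sum_k Re ((x k)^* * y k) ^+ 2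
                       + 2 * \sum_k csq (x k) * csq (y k))
  + 4 * a * b ^+ 3 * (\sum_k Re ((x k)^* * y k) * csq (y k))
  + b ^+ 4 * norm44 y.
Proof.
rewrite /norm44 !mulr_sumr mulrDr !mulr_sumr -!big_split; apply: eq_bigr => k _ /=.
by rewrite csq_lincomb; ring.
Qed.

Lemma norm22_ge0 x : 0 <= norm22 x.
Proof. by apply: sumr_ge0 => k _; apply: csq_ge0. Qed.

Lemma norm22_eq0 x : norm22 x = 0 -> forall k, x k = 0.
Proof.
by move=> /psumr_eq0P x0 k; apply: csq_eq0; apply: x0 => // i _; apply: csq_ge0.
Qed.

Lemma sphere_decomp z w : on_sphere z -> on_sphere w ->
  exists a b v, [/\ 0 <= b, tangent z v, on_sphere v,
    a ^+ 2 + b ^+ 2 = 1 & w = lincomb a b z v].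
Proof.
move=> z_unit w_unit; set c := reinner w z.
pose u := lincomb 1 (- c) w z.
have u_tangent : tangent z u.
  by rewrite /tangent reinner_lincombl reinnerxx z_unit -/c; ring.
have u_norm : norm22 u = 1 - c ^+ 2.
  by rewrite norm22_lincomb w_unit z_unit -/c; ring.
have w_split k : w k = c%:C * z k + u k.
  by rewrite /u /lincomb rmorphN rmorph1 /=; ring.
have [u0 | u_neq0] := eqVneq (norm22 u) 0.
  (* [w] is a multiple of [z]: any unit tangent direction will do, e.g. [i z]. *)
  exists c, 0, (fun k => 'i * z k); split=> //.
  - by rewrite /tangent reinnerE big1 // => k _; apply: ReJM_iMl.
  - by rewrite /on_sphere -z_unit; apply: eq_bigr => k _; apply: csq_iMl.
  - by move: u0; rewrite u_norm; nra.
  apply: funext => k.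
  by rewrite w_split (norm22_eq0 u0) /lincomb rmorph0 mul0r.
have u_gt0 : 0 < norm22 u by rewrite lt_def u_neq0 norm22_ge0.
set b := Num.sqrt (norm22 u).
have b_gt0 : 0 < b by rewrite sqrtr_gt0.
have b2 : b ^+ 2 = norm22 u by rewrite sqr_sqrtr ?ltW.
exists c, b, (lincomb 0 b^-1 z u); split.
- exact: ltW.
- by rewrite /tangent reinner_lincombl u_tangent; ring.
- rewrite /on_sphere norm22_lincomb reinnerC u_tangent -b2.
  by field; rewrite gt_eqF.
- by rewrite b2 u_norm; ring.
apply: funext => k.
rewrite w_split /lincomb rmorph0 mul0r add0r mulrA -rmorphM divff ?gt_eqF //.
by rewrite rmorph1 mul1r.
Qed.

Section OrthonormalPair.
Variables z v : vec.
Hypotheses (z_unit : on_sphere z) (v_tangent : tangent z v) (v_unit : on_sphere v).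

Lemma on_sphere_lincomb a b : a ^+ 2 + b ^+ 2 = 1 -> on_sphere (lincomb a b z v).
Proof.
move=> ab1; rewrite /on_sphere norm22_lincomb z_unit v_unit reinnerC v_tangent.
by rewrite mulr0 addr0 !mulr1.
Qed.

Lemma dist_lincomb_lt a b eps : 0 < eps ->
  (dist (lincomb a b z v) z < eps) = ((a - 1) ^+ 2 + b ^+ 2 < eps ^+ 2).
Proof.
move=> eps_gt0; rewrite /dist.
have -> : \sum_k csq (lincomb a b z v k - z k) = norm22 (lincomb (a - 1) b z v).
  by apply: eq_bigr => k _; congr csq; rewrite /lincomb rmorphB /=; ring.
rewrite norm22_lincomb z_unit v_unit reinnerC v_tangent mulr0 addr0 !mulr1.
by rewrite -[X in _ < X](ger0_norm (ltW eps_gt0)) -sqrtr_sqr ltr_sqrt ?exprn_gt0.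
Qed.

End OrthonormalPair.
End Vectors.

Section Expansion.
Variables (R : realType) (n : nat) (A : 'M[R[i]]_n) (beta : R) (z : 'I_n -> R[i]).
Local Notation vec := ('I_n -> R[i]).
Implicit Types (a b : R) (x y v : vec).
Hypothesis A_herm : is_hermitian A.

Definition hform x y : R := Re (\sum_i \sum_j (x i)^* * A i j * y j).

Lemma hformE x y : hform x y = \sum_i \sum_j Re ((x i)^* * A i j * y j).
Proof. by rewrite /hform raddf_sum; apply: eq_bigr => i _; apply: raddf_sum. Qed.

Lemma hformC x y : hform x y = hform y x.
Proof.
rewrite !hformE exchange_big; apply: eq_bigr => i _; apply: eq_bigr => j _ /=.
by rewrite A_herm ReJMM_conj.
Qed.

Lemma quadA_lincomb a b x y : quadA A (lincomb a b x y) =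
  a ^+ 2 * hform x x + 2 * a * b * hform x y + b ^+ 2 * hform y y.
Proof.
transitivity (a ^+ 2 * hform x x + a * b * hform x y + a * b * hform y x
              + b ^+ 2 * hform y y); last by rewrite (hformC y x); ring.
rewrite [LHS]hformE !hformE !mulr_sumr -!big_split; apply: eq_bigr => i _ /=.
rewrite !mulr_sumr -!big_split; apply: eq_bigr => j _ /=.
exact: ReJMM_lincomb.
Qed.

Hypothesis z_stat : stationary A beta z.

Lemma hform_tangent v : tangent z v ->
  hform v z = - (2 * beta) * \sum_k csq (z k) * Re ((z k)^* * v k).
Proof.
case: z_stat => _ z_eq v_tan.
have -> : hform v z =
    \sum_i (2 * lam A beta z - 2 * beta * csq (z i)) * Re ((v i)^* * z i).
  rewrite /hform raddf_sum; apply: eq_bigr => i _.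
  have Az : \sum_j A i j * z j = (2 * lam A beta z - 2 * beta * csq (z i))%:C * z i.
    by rewrite rmorphB /= mulrBl -(z_eq i) addrK.
  rewrite -ReCM mulrCA -Az mulr_sumr; congr Re; apply: eq_bigr => j _.
  by rewrite mulrA.
rewrite /tangent reinnerE in v_tan.
under eq_bigr do rewrite mulrBl.
rewrite sumrB -!mulr_sumr v_tan mulr0 sub0r mulNr mulr_sumr.
by congr (- _); apply: eq_bigr => k _; rewrite ReJMC mulrA.
Qed.

Lemma fobj_lincomb_sub a b v : tangent z v -> on_sphere v -> a ^+ 2 + b ^+ 2 = 1 ->
  2 * (fobj A beta (lincomb a b z v) - fobj A beta z) =
  b ^+ 2 * (a ^+ 2 * Hf A beta z v + 4 * a * b * H3 beta z v
            + 2 * b ^+ 2 * (fobj A beta v - fobj A beta z)).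
Proof.
move=> v_tan v_unit ab1.
have Hf_diag : \sum_k (2 * beta * csq (z k) - 2 * lam A beta z) * csq (v k) =
    2 * beta * (\sum_k csq (z k) * csq (v k)) - 2 * lam A beta z * norm22 v.
  by rewrite /norm22 !mulr_sumr -sumrB; apply: eq_bigr => k _; ring.
have Hf_re : \sum_k Re (v k * (z k)^*) ^+ 2 = \sum_k Re ((z k)^* * v k) ^+ 2.
  by apply: eq_bigr => k _; rewrite mulrC.
have H3_split : \sum_k (csq (v k) - csq (z k)) * Re ((z k)^* * v k) =
    \sum_k Re ((z k)^* * v k) * csq (v k) - \sum_k csq (z k) * Re ((z k)^* * v k).
  by rewrite -sumrB; apply: eq_bigr => k _; ring.
rewrite /Hf /H3 Hf_diag Hf_re H3_split v_unit /lam /fobj quadA_lincomb norm44_lincomb.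
rewrite (hformC z v) (hform_tangent v_tan).
change (quadA A v) with (hform v v); change (quadA A z) with (hform z z).
set P := hform z z; set Q := hform v v; set S := norm44 z.
set X := \sum_k csq (z k) * Re ((z k)^* * v k).
apply/eqP; rewrite -subr_eq0; apply/eqP.
transitivity ((a ^+ 2 + b ^+ 2 - 1) *
  ((1 + b ^+ 2) * P - b ^+ 2 * Q + 4 * a * b * beta * X
   + beta * S * (a ^+ 2 + b ^+ 2 + 1))); first by field.
by rewrite ab1 subrr mul0r.
Qed.

Lemma Gfun_lincomb a b v : tangent z v -> on_sphere v -> b != 0 ->
  a ^+ 2 + b ^+ 2 = 1 ->
  2 * (fobj A beta (lincomb a b z v) - fobj A beta z) = b ^+ 4 * Gfun A beta z v (a / b).
Proof. by move=> v_tan v_unit b_neq0 ab1; rewrite fobj_lincomb_sub // /Gfun; field. Qed.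

End Expansion.

Section UnitCircle.
Variable R : rcfType.
Implicit Types (M a b t eps : R).

Lemma circle_point_of_slope eps t : 0 < eps -> 2 / eps <= `|t| ->
  exists a b, [/\ b != 0, a ^+ 2 + b ^+ 2 = 1, a / b = t
                & (a - 1) ^+ 2 + b ^+ 2 < eps ^+ 2].
Proof.
move=> eps_gt0 t_large.
have t_gt0 : 0 < `|t| by apply: lt_le_trans t_large; rewrite divr_gt0.
have t2 : `|t| ^+ 2 = t ^+ 2 := real_normK (num_real t).
have t_neq0 : t != 0 by rewrite -normr_gt0.
set d := Num.sqrt (1 + t ^+ 2).
have d_gt0 : 0 < d by rewrite sqrtr_gt0 ltr_pwDl ?sqr_ge0.
have d2 : d ^+ 2 = 1 + t ^+ 2 by rewrite sqr_sqrtr // addr_ge0 ?sqr_ge0.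
set a := `|t| / d; set b := t / (`|t| * d).
have b_neq0 : b != 0 by rewrite /b !mulf_eq0 invr_eq0 mulf_eq0 !negb_or t_neq0 !gt_eqF.
have ab1 : a ^+ 2 + b ^+ 2 = 1.
  rewrite !expr_div_n exprMn t2 d2; field.
  by rewrite t_neq0 andbT -d2 sqrf_eq0 gt_eqF.
have a_slope : a / b = t.
  have -> : a / b = `|t| ^+ 2 / t by rewrite /a /b; field; rewrite t_neq0 !gt_eqF.
  by rewrite t2 expr2 mulfK.
exists a, b; split=> //.
have a_ge0 : 0 <= a by rewrite divr_ge0 ?ltW.
have a_tb : a = t * b by rewrite -a_slope mulfVK.
have t2_large : 4 <= t ^+ 2 * eps ^+ 2.
  have : 2 <= `|t| * eps by rewrite -ler_pdivrMr.
  by rewrite -t2 -exprMn; nra.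
have a_le1 : a <= 1 by nra.
have chord : (a - 1) ^+ 2 + b ^+ 2 <= 2 * b ^+ 2 by nra.
have b_small : 4 * b ^+ 2 <= eps ^+ 2.
  have : 0 <= (t ^+ 2 * eps ^+ 2 - 4) * b ^+ 2 by rewrite mulr_ge0 ?subr_ge0 ?sqr_ge0.
  have : a ^+ 2 = t ^+ 2 * b ^+ 2 by rewrite a_tb exprMn.
  nra.
have : 0 < eps ^+ 2 by rewrite exprn_gt0.
lra.
Qed.

Lemma circle_slope_ge M a b : 0 <= M -> 0 < b -> a ^+ 2 + b ^+ 2 = 1 ->
  (a - 1) ^+ 2 + b ^+ 2 < (2 * M + 1)^-1 ^+ 2 -> M <= `|a / b|.
Proof.
move=> M_ge0 b_gt0 ab1; set e := (2 * M + 1)^-1 => near.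
have e_gt0 : 0 < e by rewrite invr_gt0; lra.
have eM : e * (2 * M + 1) = 1 by rewrite mulVf //; lra.
have e_le1 : e <= 1 by nra.
have b_lt_e : b < e.
  have : b ^+ 2 < e ^+ 2 by have := sqr_ge0 (a - 1); lra.
  nra.
have a_gt_half : 1 / 2 < a by nra.
have Mb_le_Me : M * b <= M * e by rewrite ler_wpM2l // ltW.
apply: le_trans (ler_norm _); rewrite ler_pdivlMr //; nra.
Qed.

End UnitCircle.

Theorem theorem2 (R : realType) (n : nat) (A : 'M[R[i]]_n) (beta : R)
  (z : 'I_n -> R[i]) :
  is_hermitian A -> 0 < beta -> stationary A beta z ->
  (local_min_sphere A beta z <->
   exists M : R, 0 < M /\
     forall (v : 'I_n -> R[i]) (t : R),
       tangent z v -> on_sphere v -> M <= `|t| -> 0 <= Gfun A beta z v t).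
Proof.
move=> A_herm _ z_stat; have z_unit := z_stat.1.
split.
- case=> _ [eps [eps_gt0 z_min]].
  exists (2 / eps); split=> [|v t v_tan v_unit t_large]; first by rewrite divr_gt0.
  have [a [b [b_neq0 ab1 <- w_near]]] := circle_point_of_slope eps_gt0 t_large.
  have w_unit := on_sphere_lincomb z_unit v_tan v_unit ab1.
  rewrite -(dist_lincomb_lt z_unit v_tan v_unit _ _ eps_gt0) in w_near.
  have := z_min _ w_unit w_near.
  have b4_gt0 : 0 < b ^+ 4 by rewrite exprn_even_gt0.
  by rewrite -(pmulr_rge0 _ b4_gt0) -Gfun_lincomb //; lra.
- case=> M [M_gt0 G_ge0]; split=> //.
  set eps := (2 * M + 1)^-1.
  have eps_gt0 : 0 < eps by rewrite invr_gt0; lra.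
  exists eps; split=> // w w_unit.
  have [a [b [v [b_ge0 v_tan v_unit ab1 ->]]]] := sphere_decomp z_unit w_unit.
  rewrite dist_lincomb_lt // => w_near.
  have [b0 | b_neq0] := eqVneq b 0.
    have := fobj_lincomb_sub A_herm z_stat v_tan v_unit ab1.
    by rewrite b0 expr2 !mul0r; lra.
  have b_pos : 0 < b by rewrite lt_def b_neq0 b_ge0.
  have := G_ge0 v (a / b) v_tan v_unit (circle_slope_ge (ltW M_gt0) b_pos ab1 w_near).
  have b4_gt0 : 0 < b ^+ 4 by rewrite exprn_gt0.
  by rewrite -(pmulr_rge0 _ b4_gt0) -Gfun_lincomb //; lra.
Qed.
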